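(* Let $\Theta\subset\mathbb{R}^p$ be compact and convex, let $\mathcal U$ be an open neighborhood of $\Theta$, and let $\mathscr F:\mathcal U\to\mathbb{R}$ be continuously differentiable. Let $\mathscr G:\Theta\times\Theta\to\mathbb R$ be differentiable in its first argument and satisfy, for all $\boldsymbol\theta,\boldsymbol\theta'\in\Theta$: (majorization) $\mathscr G(\boldsymbol\theta\mid\boldsymbol\theta')\ge\mathscr F(\boldsymbol\theta)$; (strong tangency) $\mathscr G(\boldsymbol\theta\mid\boldsymbol\theta)=\mathscr F(\boldsymbol\theta)$ and $\nabla_1\mathscr G(\boldsymbol\theta\mid\boldsymbol\theta)=\nabla\mathscr F(\boldsymbol\theta)$; (regularity) for each fixed $\boldsymbol\theta'$, $\nabla_1\mathscr G(\cdot\mid\boldsymbol\theta')$ is $L$-Lipschitz on $\Theta$. Let $(\varepsilon_t)_{t\ge0}$, $(\delta_t)_{t\ge0}$ be sequences of strictly positive numbers with $\sum_t\varepsilon_t<\infty$ and $\sum_t\delta_t\le\delta$ for some $\delta\in(0,1)$. Let $(\widehat{\boldsymbol\theta}_t)_{t\ge0}$ be generated by $\widehat{\boldsymbol\theta}_{t+1}\in\arg\min_{\boldsymbol\theta\in\Theta}\widehat{\mathscr G}_t(\boldsymbol\theta\mid\widehat{\boldsymbol\theta}_t)$, where $\widehat{\mathscr G}_t(\cdot\mid\cdot)$ are random approximations of $\mathscr G$ such that for every $t\ge0$, $$\mathbb P\Big(\max_{\boldsymbol\theta\in\Theta}\big|\mathscr G(\boldsymbol\theta\mid\widehat{\boldsymbol\theta}_t)-\widehat{\mathscr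 G}_t(\boldsymbol\theta\mid\widehat{\boldsymbol\theta}_t)\big|\le\tfrac{\varepsilon_t}{2}\ \Big|\ \widehat{\boldsymbol\theta}_t\Big)\ge1-\delta_t .$$ Then, with probability at least $1-\delta$, every accumulation point $\boldsymbol\theta^*$ of $(\widehat{\boldsymbol\theta}_t)$ is a first-order stationary point of $\mathscr F$ over $\Theta$, i.e. $\langle\nabla\mathscr F(\boldsymbol\theta^* ),\boldsymbol\theta-\boldsymbol\theta^*\rangle\ge0$ for all $\boldsymbol\theta\in\Theta$.
   Context: $\nabla_1\mathscr G(\boldsymbol\theta\mid\boldsymbol\theta')$ denotes the gradient of $\mathscr G$ with respect to its first argument $\boldsymbol\theta$, with the anchor $\boldsymbol\theta'$ held fixed. $\langle\cdot,\cdot\rangle$ is the Euclidean inner product. *)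

From HB Require Import structures.
From mathcomp Require Import all_boot all_order all_algebra.
From mathcomp Require Import all_classical all_reals all_analysis.
Set Implicit Arguments. Unset Strict Implicit. Unset Printing Implicit Defensive.
Import Order.TTheory GRing.Theory Num.Theory.
Import numFieldNormedType.Exports.
Local Open Scope classical_set_scope.
Local Open Scope ring_scope.

Section defs.
Context {R : realType} {p : nat}.

Definition dotv (u v : 'rV[R]_p) : R := \sum_(i < p) u ord0 i * v ord0 i.
Definition enorm (u : 'rV[R]_p) : R := Num.sqrt (dotv u u).

Definition gradient (f : 'rV[R]_p -> R) (x : 'rV[R]_p) : 'rV[R]_p :=
  \row_(i < p) ('d f x (delta_mx ord0 i : 'rV[R]_p)).

Definition grad1 (G : 'rV[R]_p -> 'rV[R]_p -> R) (th th' : 'rV[R]_p) : 'rV[R]_p :=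
  gradient (fun x => G x th') th.

Definition stationary (F : 'rV[R]_p -> R) (Theta : set 'rV[R]_p) (x : 'rV[R]_p) :=
  Theta x /\ forall y, Theta y -> 0 <= dotv (gradient F x) (y - x).

Definition borel_rV : set (set 'rV[R]_p) := <<s [set U | open U] >>.
End defs.

(* "P(A | X) >= c" (almost surely), for an event A and an R^p-valued random
   variable X, stated through the defining property of conditional
   probability given sigma(X): for every Borel set B,
   P(A /\ X in B) >= c * P(X in B). *)
Definition cond_prob_ge {R : realType} {p : nat} (d : measure_display)
  (Omega : measurableType d) (P : probability Omega R)
  (A : set Omega) (X : Omega -> 'rV[R]_p) (c : R) : Prop :=
  forall B : set 'rV[R]_p, borel_rV B ->
    (c%:E * P (X @^-1` B) <= P (A `&` (X @^-1` B)))%E.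

From HB Require Import structures.
From mathcomp Require Import all_boot all_order all_algebra.
From mathcomp Require Import all_classical all_reals all_analysis.
From mathcomp Require Import ring lra.
Import Order.TTheory GRing.Theory Num.Theory.
Import numFieldNormedType.Exports.
Local Open Scope classical_set_scope.
Local Open Scope ring_scope.

(* On the event that every surrogate is eps_t/2-accurate, which by a union
   bound has probability at least 1 - sum dlt_t >= 1 - delta, the iterates
   satisfy F(th_{t+1}) <= G(th | th_t) + eps_t for all th in Theta.  If a
   cluster point th* had a descent direction y - th*, then each time th_t is
   close to th*, the L-smoothness of G(. | th_t) and the tangency conditions
   make a short step towards y lower the bound to F(th_t) - eta + eps_t for a
   fixed eta > 0.  As F(th_t) - sum_(s < t) eps_s is nonincreasing and bounded
   below on the compact Theta, this can happen only finitely often, although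
   th_t comes back near th* infinitely often. *)

Section euclidean.
Context {R : realType} {p : nat}.
Implicit Types (u v w : 'rV[R]_p) (f : 'rV[R]_p -> R).

Lemma dotvC u v : dotv u v = dotv v u.
Proof. by apply: eq_bigr => i _; rewrite mulrC. Qed.

Lemma dotvDr u v w : dotv u (v + w) = dotv u v + dotv u w.
Proof. by rewrite /dotv -big_split; apply: eq_bigr => i _; rewrite !mxE mulrDr. Qed.

Lemma dotvZr (a : R) u v : dotv u (a *: v) = a * dotv u v.
Proof. by rewrite /dotv mulr_sumr; apply: eq_bigr => i _; rewrite !mxE mulrCA. Qed.

Lemma dotvZl (a : R) u v : dotv (a *: u) v = a * dotv u v.
Proof. by rewrite dotvC dotvZr dotvC. Qed.

Lemma dotvBr u v w : dotv u (v - w) = dotv u v - dotv u w.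
Proof. by rewrite dotvDr -scaleN1r dotvZr mulN1r. Qed.

Lemma dotvBl u v w : dotv (v - w) u = dotv v u - dotv w u.
Proof. by rewrite dotvC dotvBr !(dotvC u). Qed.

Lemma dotvv_ge0 u : 0 <= dotv u u.
Proof. by apply: sumr_ge0 => i _; rewrite -expr2 sqr_ge0. Qed.

Lemma enorm_ge0 u : 0 <= enorm u.
Proof. exact: sqrtr_ge0. Qed.

Lemma sqr_enorm u : enorm u ^+ 2 = dotv u u.
Proof. by rewrite sqr_sqrtr // dotvv_ge0. Qed.

Lemma enorm_eq0_dotv u v : enorm u = 0 -> dotv u v = 0.
Proof.
move=> u0; have /eqP : dotv u u = 0 by rewrite -sqr_enorm u0 expr0n.
rewrite psumr_eq0 => [/allP uu0|i _]; last by rewrite -expr2 sqr_ge0.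
apply: big1 => i _.
by have := uu0 i (mem_index_enum _); rewrite -expr2 sqrf_eq0 => /eqP ->; rewrite mul0r.
Qed.

Lemma enormZ (a : R) u : 0 <= a -> enorm (a *: u) = a * enorm u.
Proof.
move=> a_ge0; rewrite /enorm dotvZl dotvZr mulrA sqrtrM ?mulr_ge0 //.
by rewrite -expr2 sqrtr_sqr ger0_norm.
Qed.

Lemma cauchy_schwarz_dotv u v : dotv u v <= enorm u * enorm v.
Proof.
have [/eqP|uv_neq0] := eqVneq (enorm u * enorm v) 0.
  rewrite mulf_eq0 => /orP[] /eqP n0; first by rewrite enorm_eq0_dotv // n0 mul0r.
  by rewrite dotvC enorm_eq0_dotv // n0 mulr0.
have uv_gt0 : 0 < enorm u * enorm v.
  by rewrite lt_def uv_neq0 mulr_ge0 ?enorm_ge0.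
have := dotvv_ge0 (enorm v *: u - enorm u *: v).
rewrite !(dotvBl, dotvBr, dotvZl, dotvZr) (dotvC v u) -!sqr_enorm => h.
rewrite -subr_ge0 -(pmulr_rge0 _ uv_gt0); nra.
Qed.

Lemma diff_dotv_gradient f z v : 'd f z v = dotv (gradient f z) v.
Proof.
rewrite {1}(row_sum_delta v) linear_sum /dotv; apply: eq_bigr => i _.
by rewrite linearZ /= mxE mulrC.
Qed.

Lemma cvg_dotv {T} {F : set_system T} {FF : Filter F} {a b : T -> 'rV[R]_p} {a0 b0} :
  a @ F --> a0 -> b @ F --> b0 -> (fun z => dotv (a z) (b z)) @ F --> dotv a0 b0.
Proof.
move=> a_cvg b_cvg; apply: (cvg_big (op := +%R) (x0 := 0) (P := xpredT)).
  exact: add_continuous.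
move=> i _; apply: cvgM.
  exact: (continuous_cvg _ (@coord_continuous R 1 p ord0 i a0) a_cvg).
exact: (continuous_cvg _ (@coord_continuous R 1 p ord0 i b0) b_cvg).
Qed.

End euclidean.

Section segment.
Context {R : realType}.

Lemma convex_segment {E : lmodType R} {K : set (convex_lmodType E)} {a b : E} {t : R} :
  convex_set K -> K a -> K b -> 0 <= t <= 1 -> K (a + t *: (b - a)).
Proof.
move=> K_cvx Ka Kb /andP[t_ge0 t_le1].
have := K_cvx b a (Itv01 t_ge0 t_le1); rewrite !inE => /(_ Kb Ka).
by congr K; rewrite /conv /= /unstable.onem scalerBl scale1r scalerBr [RHS]addrCA.
Qed.

Context {p : nat}.
Implicit Types (x w : 'rV[R]_p) (f : 'rV[R]_p -> R).

Lemma is_derive_line {f x w t} : differentiable f (x + t *: w) ->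
  is_derive t 1 (fun s => f (x + s *: w)) (dotv (gradient f (x + t *: w)) w).
Proof.
move=> df.
have shift_line :
    (fun h : R => h^-1 *: (((fun s => f (x + s *: w)) \o shift t) (h *: 1) - f (x + t *: w)))
    = (fun h => h^-1 *: ((f \o shift (x + t *: w)) (h *: w) - f (x + t *: w))).
  by apply/funext => h /=; rewrite /shift [_%:A]mulr1 scalerDl addrCA.
split; rewrite /derivable /derive shift_line.
  exact: diff_derivable.
by rewrite -/(derive f _ w) deriveE // diff_dotv_gradient.
Qed.

Lemma mvt_line f x w {s : R} :
  0 < s -> (forall t, 0 <= t <= s -> differentiable f (x + t *: w)) ->
  exists2 c, 0 < c < s & f (x + s *: w) - f x = s * dotv (gradient f (x + c *: w)) w.
Proof.
move=> s_gt0 df.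
have [||c c_in] := MVT (f := fun t => f (x + t *: w))
  (df := fun t => dotv (gradient f (x + t *: w)) w) s_gt0.
- move=> c; rewrite in_itv /= => /andP[c_gt0 c_lt_s]; apply: is_derive_line.
  by apply: df; rewrite !ltW.
- apply: continuous_in_subspaceT => t; rewrite inE /= in_itv /= => tI.
  have [t_derivable _] := is_derive_line (df t tI).
  exact/differentiable_continuous/derivable1_diffP.
- rewrite scale0r addr0 subr0 mulrC => ->.
  by exists c => //; rewrite in_itv /= in c_in.
Qed.

Lemma lipschitz_gradient_le f (L : R) {K : set (convex_lmodType 'rV[R]_p)} {x y s} :
  convex_set K -> K x -> K y -> (forall z, K z -> differentiable f z) ->
  (forall a b, K a -> K b -> enorm (gradient f a - gradient f b) <= L * enorm (a - b)) ->
  0 <= s <= 1 ->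
  f (x + s *: (y - x)) <= f x + s * dotv (gradient f x) (y - x)
                          + `|L| * s ^+ 2 * enorm (y - x) ^+ 2.
Proof.
move=> K_cvx Kx Ky df f_lip /andP[s_ge0 s_le1].
have [->|s_neq0] := eqVneq s 0.
  by rewrite scale0r addr0 mul0r expr0n /= mulr0 mul0r !addr0.
have s_gt0 : 0 < s by rewrite lt_def s_neq0.
set w := y - x.
have Kseg t : 0 <= t <= 1 -> K (x + t *: w) by exact: convex_segment.
have [|c /andP[c_gt0 c_lt_s] mvt_eq] := mvt_line f x w s_gt0.
  by move=> t /andP[t_ge0 t_le_s]; apply/df/Kseg; rewrite t_ge0 (le_trans t_le_s).
have gradient_gap : dotv (gradient f (x + c *: w) - gradient f x) w
                    <= `|L| * s * enorm w ^+ 2.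
  apply: le_trans (cauchy_schwarz_dotv _ _) _.
  rewrite expr2 mulrA; apply: (ler_wpM2r (enorm_ge0 _)).
  have seg_c : x + c *: w - x = c *: w by rewrite addrC addKr.
  have := f_lip _ _ (Kseg c _) Kx; rewrite seg_c (enormZ _ _ (ltW c_gt0)) => lip.
  apply: le_trans (lip _) _; first by rewrite !ltW // (lt_le_trans c_lt_s).
  rewrite mulrA; apply: (ler_wpM2r (enorm_ge0 _)).
  apply: le_trans (ler_wpM2r (ltW c_gt0) (ler_norm L)) _.
  by apply: ler_wpM2l; [exact: normr_ge0 | exact: ltW].
rewrite dotvBl in gradient_gap.
have -> : f (x + s *: w) = f x + s * dotv (gradient f (x + c *: w)) w.
  by rewrite -mvt_eq addrCA subrr addr0.
rewrite -addrA lerD2l -lerBlDl -mulrBr.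
apply: le_trans (ler_wpM2l s_ge0 gradient_gap) _.
by rewrite mulrCA !mulrA.
Qed.
End segment.


Section cluster_seq.
Context {T : topologicalType}.
Implicit Types (x : nat -> T) (z : T).

Lemma cluster_seq_closed {K : set T} {x z} :
  closed K -> (forall t, K (x t)) -> cluster (x @ \oo) z -> K z.
Proof.
move=> K_closed xK; rewrite clusterE (closure_id K).1 // => /(_ K); apply.
change (\forall t \near \oo, K (x t)); exact: filterE.
Qed.

Lemma cluster_seq_frequently {x z} {N : set T} m :
  cluster (x @ \oo) z -> nbhs z N -> exists2 t, (m <= t)%N & N (x t).
Proof.
move=> z_cluster zN.
have tail_near : (x @ \oo) (x @` [set t | (m <= t)%N]).
  by apply: filterS (nbhs_infty_ge m) => t mt; exists t.
by have [_ [[t mt <-] Nxt]] := z_cluster _ _ tail_near zN; exists t.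
Qed.

End cluster_seq.

Section perturbed_descent.
Context {R : realType}.

Lemma partial_sum_le_nneseries (e : nat -> R) T : (forall t, 0 <= e t) ->
  (\sum_(0 <= t <oo) (e t)%:E < +oo)%E ->
  \sum_(t < T) e t <= fine (\sum_(0 <= t <oo) (e t)%:E).
Proof.
move=> e_ge0 e_sum_lty.
have e_sum_ge0 : (0 <= \sum_(0 <= t <oo) (e t)%:E)%E.
  by apply: nneseries_ge0 => t _ _; rewrite lee_fin.
rewrite -lee_fin fineK; last by rewrite ge0_fin_numE.
have := @nneseries_lim_ge R (fun t => (e t)%:E) xpredT 0%N T (fun t _ _ => e_ge0 t).
by rewrite big_mkord sumEFin.
Qed.

(* [a T - sum_(t < T) e t] is nonincreasing, drops by [eta] at each large step
   and stays above [M - sum e], so there are only finitely many large steps. *)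
Lemma perturbed_descent_finitely_many_drops (a e : nat -> R) (M eta : R) :
  0 < eta -> (forall t, M <= a t) -> (forall t, 0 <= e t) ->
  (\sum_(0 <= t <oo) (e t)%:E < +oo)%E ->
  (forall t, a t.+1 <= a t + e t) ->
  ~ (forall m, exists2 t, (m <= t)%N & a t.+1 <= a t + e t - eta).
Proof.
move=> eta_gt0 a_ge e_ge0 e_sum_lty a_step drops.
have partial_le T := partial_sum_le_nneseries e T e_ge0 e_sum_lty.
set E := fine _ in partial_le.
pose phi T := a T - \sum_(t < T) e t.
have phi_step T : phi T.+1 <= phi T.
  by rewrite /phi big_ord_recr /=; have := a_step T; lra.
have phi_nonincr : nonincreasing_seq phi by apply/nonincreasing_seqP.
have phi_ge T : M - E <= phi T.
  by rewrite /phi; have := partial_le T; have := a_ge T; lra.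
have phi_drops k : exists T, phi T <= phi 0%N - k%:R * eta.
  elim: k => [|k [T phiT]]; first by exists 0%N; rewrite mul0r subr0.
  have [t Tt drop] := drops T; exists t.+1.
  have phi_drop : phi t.+1 <= phi t - eta.
    by rewrite /phi big_ord_recr /=; move: drop; lra.
  by have := phi_nonincr _ _ Tt; rewrite -natr1 mulrDl mul1r; lra.
have [T] := phi_drops (Num.truncn ((phi 0%N - M + E) / eta)).+1.
have := truncnS_gt ((phi 0%N - M + E) / eta); rewrite ltr_pdivrMr //.
by have := phi_ge T; lra.
Qed.

End perturbed_descent.

Section probability_bounds.
Context {R : realType} {d : measure_display} {Omega : measurableType d}.
Variable P : probability Omega R.

Lemma cond_prob_ge_prob {p : nat} {A : set Omega} {X : Omega -> 'rV[R]_p} {c : R} :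
  cond_prob_ge P A X c -> (c%:E <= P A)%E.
Proof.
have borelT : borel_rV (setT : set 'rV[R]_p) by apply: sub_sigma_algebra; exact: openT.
move=> /(_ setT borelT).
by rewrite preimage_setT setIT probability_setT mule1.
Qed.

Lemma probability_bigcap_ge {A : nat -> set Omega} {dlt : nat -> R} {delta : R} :
  (forall t, measurable (A t)) -> (forall t, ((1 - dlt t)%:E <= P (A t))%E) ->
  (\sum_(0 <= t <oo) (dlt t)%:E <= delta%:E)%E ->
  ((1 - delta)%:E <= P (\bigcap_t A t))%E.
Proof.
move=> mA PA dlt_sum.
have mAC t : measurable (~` A t) by exact: measurableC.
have PAC t : (P (~` A t) <= (dlt t)%:E)%E.
  rewrite probability_setC //; move: (PA t) (probability_le1 P (mA t)).
  by case: (P (A t)) (measure_ge0 P (A t)) => //= r; rewrite -EFinB !lee_fin; lra.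
have union_bound : (P (~` \bigcap_t A t) <= delta%:E)%E.
  apply: le_trans dlt_sum.
  apply: le_trans (lee_nneseries (fun t _ _ => measure_ge0 P _) (fun t _ => PAC t)).
  apply: measure_sigma_subadditive => //; last by rewrite setC_bigcap.
  exact/measurableC/bigcapT_measurable.
rewrite -[X in P X]setCK probability_setC; last exact/measurableC/bigcapT_measurable.
move: union_bound; case: (P (~` \bigcap_t A t)) => [r||] //=.
  by rewrite -EFinD !lee_fin; lra.
by rewrite addey // leey.
Qed.

End probability_bounds.

Lemma approx_argmin_le {R : realType} {T : Type} (g h : T -> R) {K : set T} {e : R} {z : T} :
  (forall th, K th -> `|g th - h th| <= e / 2) ->
  K z -> (forall th, K th -> h z <= h th) -> forall th, K th -> g z <= g th + e.
Proof.
move=> gh_close Kz z_min th Kth.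
have := gh_close _ Kz; have := gh_close _ Kth; have := z_min _ Kth.
by rewrite !ler_norml; lra.
Qed.

Lemma quadratic_model_decrease {R : realType} {l c K : R} : 0 <= l -> 0 < c -> 0 < K ->
  exists2 s, 0 < s <= 1 &
    forall d n, d <= - c / 2 -> n <= K -> s * d + l * s ^+ 2 * n <= - (s * c / 4).
Proof.
move=> l_ge0 c_gt0 K_gt0.
set D := 4 * ((l + 1) * K).
have D_gt0 : 0 < D by rewrite !mulr_gt0 // ltr_pwDr.
set s := Num.min 1 (c / D).
have s_gt0 : 0 < s by rewrite lt_min ltr01 divr_gt0.
have s_le1 : s <= 1 by rewrite ge_min lexx.
have sD_le : s * D <= c by rewrite -ler_pdivlMr // ge_min lexx orbT.
exists s; first by rewrite s_gt0 s_le1.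
move=> d n d_le n_le.
have : s * d <= s * (- c / 2) by rewrite ler_pM2l.
have : l * s ^+ 2 * n <= l * s ^+ 2 * K.
  by apply: ler_wpM2l => //; rewrite mulr_ge0 ?sqr_ge0.
have : s * (l * s * K) <= s * (c / 4).
  rewrite ler_pM2l // ler_pdivlMr // mulrC; apply: le_trans sD_le.
  by rewrite /D; nra.
rewrite expr2; lra.
Qed.

Section mm_deterministic.
Context {R : realType} {p : nat}.
Implicit Types (F : 'rV[R]_p -> R) (G : 'rV[R]_p -> 'rV[R]_p -> R).

Lemma near_descent_direction {F} {U : set 'rV[R]_p} {z y} {a b : R} :
  {within U, continuous (gradient F)} -> U z ->
  dotv (gradient F z) (y - z) < a -> dotv (y - z) (y - z) < b ->
  \forall w \near z, U w -> dotv (gradient F w) (y - w) < a /\ dotv (y - w) (y - w) < b.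
Proof.
move=> gradF_cont Uz dir_lt dist_lt.
have WF : Filter (within U (nbhs z)) := within_filter U (nbhs_filter z).
have gradF_cvg : gradient F @ within U (nbhs z) --> gradient F z.
  exact: (subspace_continuousP U (gradient F)).1 gradF_cont z Uz.
have dir_cvg : (fun w => y - w) @ within U (nbhs z) --> y - z.
  by apply: cvg_within_filter; apply: cvgB; [exact: cvg_cst | exact: cvg_id].
have near_both := @filterI _ _ WF _ _
  (cvgr_lt (FF := WF) _ (cvg_dotv gradF_cvg dir_cvg) _ dir_lt)
  (cvgr_lt (FF := WF) _ (cvg_dotv dir_cvg dir_cvg) _ dist_lt).
exact: near_both.
Qed.

Lemma mm_step_le F G (L : R) {Theta : set 'rV[R]_p} {e s : R} {x x' y} :
  convex_set (Theta : set (convex_lmodType 'rV[R]_p)) -> Theta x -> Theta y ->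
  (forall th, Theta th -> differentiable (fun z => G z x) th) ->
  G x x = F x -> grad1 G x x = gradient F x ->
  (forall a b, Theta a -> Theta b ->
     enorm (grad1 G a x - grad1 G b x) <= L * enorm (a - b)) ->
  (forall th, Theta th -> F x' <= G th x + e) -> 0 <= s <= 1 ->
  F x' <= F x + s * dotv (gradient F x) (y - x) + `|L| * s ^+ 2 * enorm (y - x) ^+ 2 + e.
Proof.
move=> cvxT Tx Ty dG Gxx gradGxx G_lip x'_le sI.
apply: le_trans (x'_le _ (convex_segment cvxT Tx Ty sI)) _; rewrite lerD2r.
apply: le_trans (lipschitz_gradient_le (G^~ x) L cvxT Tx Ty dG G_lip sI) _.
by rewrite Gxx -/(grad1 G x x) gradGxx.
Qed.

Theorem mm_cluster_stationary (Theta U : set 'rV[R]_p) F G (L M : R)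
    (eps : nat -> R) (x : nat -> 'rV[R]_p) :
  closed Theta -> convex_set (Theta : set (convex_lmodType 'rV[R]_p)) -> Theta `<=` U ->
  {within U, continuous (gradient F)} ->
  (forall th th', Theta th -> Theta th' -> differentiable (fun z => G z th') th) ->
  (forall th, Theta th -> G th th = F th) ->
  (forall th, Theta th -> grad1 G th th = gradient F th) ->
  (forall th', Theta th' -> forall a b, Theta a -> Theta b ->
     enorm (grad1 G a th' - grad1 G b th') <= L * enorm (a - b)) ->
  (forall th, Theta th -> M <= F th) ->
  (forall t, 0 <= eps t) -> (\sum_(0 <= t <oo) (eps t)%:E < +oo)%E ->
  (forall t, Theta (x t)) ->
  (forall t th, Theta th -> F (x t.+1) <= G th (x t) + eps t) ->
  forall z, cluster (x @ \oo) z -> stationary F Theta z.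
Proof.
move=> closedT cvxT TU gradF_cont dG G_tan gradG_tan G_lip F_ge eps_ge0 eps_sum xT x_step.
move=> z z_cluster; have Tz := cluster_seq_closed closedT xT z_cluster.
split=> // y Ty; rewrite leNgt; apply/negP => descent_dir.
set c := - dotv (gradient F z) (y - z).
have c_gt0 : 0 < c by rewrite oppr_gt0.
set K := dotv (y - z) (y - z) + 1.
have K_gt0 : 0 < K by rewrite /K; have := dotvv_ge0 (y - z); lra.
have [s /andP[s_gt0 s_le1] model_decrease] :=
  quadratic_model_decrease (normr_ge0 L) c_gt0 K_gt0.
have s_01 : 0 <= s <= 1 by rewrite (ltW s_gt0) s_le1.
have dir_z : dotv (gradient F z) (y - z) < - c / 2 by rewrite /c; lra.
have dist_z : dotv (y - z) (y - z) < K by rewrite /K ltrDl.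
have near_z := near_descent_direction gradF_cont (TU _ Tz) dir_z dist_z.
apply: (perturbed_descent_finitely_many_drops (F \o x) eps M (s * c / 4)) => //.
- by rewrite !divr_gt0 ?mulr_gt0.
- by move=> t; exact: F_ge.
- by move=> t; have := x_step t _ (xT t); rewrite G_tan.
move=> m; have [t mt /(_ (TU _ (xT t)))[dir_lt dist_lt]] :=
  cluster_seq_frequently m z_cluster near_z.
exists t => //=.
have := mm_step_le F G L cvxT (xT t) Ty (fun th Tth => dG th _ Tth (xT t))
  (G_tan _ (xT t)) (gradG_tan _ (xT t)) (G_lip _ (xT t)) (x_step t) s_01.
have := model_decrease _ _ (ltW dir_lt) (ltW dist_lt); rewrite sqr_enorm; lra.
Qed.

End mm_deterministic.

Theorem theorem4p4 (R : realType) (p : nat)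
  (Theta U : set 'rV[R]_p)
  (F : 'rV[R]_p -> R) (G : 'rV[R]_p -> 'rV[R]_p -> R) (L : R)
  (eps dlt : nat -> R) (delta : R)
  (d : measure_display) (Omega : measurableType d) (P : probability Omega R)
  (thh : nat -> Omega -> 'rV[R]_p)
  (Gh : nat -> Omega -> 'rV[R]_p -> 'rV[R]_p -> R) :
  (* Theta compact and convex, U open neighbourhood of Theta *)
  compact Theta ->
  convex_set (Theta : set (convex_lmodType 'rV[R]_p)) ->
  open U -> Theta `<=` U ->
  (* F continuously differentiable on U *)
  (forall x, U x -> differentiable F x) ->
  {within U, continuous (gradient F)} ->
  (* G differentiable in its first argument *)
  (forall th th', Theta th -> Theta th' -> differentiable (fun x => G x th') th) ->
  (* majorization *)
  (forall th th', Theta th -> Theta th' -> F th <= G th th') ->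
  (* strong tangency *)
  (forall th, Theta th -> G th th = F th) ->
  (forall th, Theta th -> grad1 G th th = gradient F th) ->
  (* regularity: grad_1 G(. | th') is L-Lipschitz on Theta *)
  (forall th', Theta th' -> forall x y, Theta x -> Theta y ->
     enorm (grad1 G x th' - grad1 G y th') <= L * enorm (x - y)) ->
  (* tolerance sequences *)
  (forall t, 0 < eps t) -> (forall t, 0 < dlt t) ->
  (\sum_(0 <= t <oo) (eps t)%:E < +oo)%E ->
  0 < delta < 1 ->
  (\sum_(0 <= t <oo) (dlt t)%:E <= delta%:E)%E ->
  (* the iterates: initialised in Theta, random variables, and
     thh (t+1) minimises Gh t (. | thh t) over Theta *)
  (forall w, Theta (thh 0%N w)) ->
  (forall t B, borel_rV B -> measurable (thh t @^-1` B)) ->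
  (forall t w, Theta (thh t.+1 w) /\
     forall th, Theta th -> Gh t w (thh t.+1 w) (thh t w) <= Gh t w th (thh t w)) ->
  (* uniform approximation event and its conditional probability bound *)
  (forall t, measurable [set w | forall th, Theta th ->
       `|G th (thh t w) - Gh t w th (thh t w)| <= eps t / 2]) ->
  (forall t, cond_prob_ge P
       [set w | forall th, Theta th ->
          `|G th (thh t w) - Gh t w th (thh t w)| <= eps t / 2]
       (thh t) (1 - dlt t)) ->
  (* conclusion: with probability at least 1 - delta, every accumulation
     point of the iterates is a first-order stationary point of F over Theta *)
  exists S : set Omega, measurable S /\ ((1 - delta)%:E <= P S)%E /\
    forall w, S w -> forall th_star,
      cluster ((fun t => thh t w) @ \oo) th_star -> stationary F Theta th_star.
Proof.
move=> cptT cvxT _ TU dF gradF_cont dG G_maj G_tan gradG_tan G_lip eps_gt0 _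
  eps_sum _ dlt_sum th0T _ thh_step approx_meas approx_prob.
set A := fun t => [set w | forall th, Theta th ->
  `|G th (thh t w) - Gh t w th (thh t w)| <= eps t / 2].
exists (\bigcap_t A t); split; first exact: bigcapT_measurable.
split.
  apply: (probability_bigcap_ge P approx_meas _ dlt_sum) => t.
  exact: (cond_prob_ge_prob P (approx_prob t)).
move=> w Aw; have thT t : Theta (thh t w).
  by case: t => [|t]; [exact: th0T | exact: (thh_step t w).1].
have F_cont : {within Theta, continuous F}.
  apply: continuous_in_subspaceT => z /set_mem Tz.
  exact/differentiable_continuous/dF/TU.
have [zmin /set_mem Tzmin F_min] := compact_EVT_min (ex_intro _ _ (thT 0%N)) cptT F_cont.
apply: (mm_cluster_stationary Theta U F G L (F zmin) eps (thh^~ w)) => //.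
- exact: compact_closed.
- by move=> z Tz; apply: F_min; rewrite inE.
- by move=> t; exact: ltW.
- move=> t th Tth; apply: le_trans (G_maj _ _ (thT t.+1) (thT t)) _.
  exact: (approx_argmin_le (G^~ (thh t w)) (Gh t w ^~ (thh t w)) (Aw t I)
    (thT t.+1) (thh_step t w).2 _ Tth).
Qed.
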